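(* Let $T$ be a complete first-order theory, $k<\omega$, and $\varphi(x,y)$ a formula. Then $T$ has an infinite $k$-grid for $\varphi(x,y)$ if and only if $T$ has an infinite strong $k$-grid for $\varphi(x,y)$.
   Context: For a linear order $L$, $L^2$ carries the product partial order: $(i,j)\le(k,\ell)$ iff $i\le k$ and $j\le\ell$. A chain is a set of pairwise comparable elements; a strict chain is a set $C$ such that any two distinct elements $x,y\in C$ satisfy $x<y$ or $y<x$; an antichain is a set of pairwise incomparable elements. A $k$-grid for $\varphi(x,y)$ indexed by $L$ is a family $(b_{i,j}:i,j\in L)$ of parameters in a model of $T$ such that for every strict chain $C\subseteq L^2$, $\{\varphi(x,b_{i,j}):(i,j)\in C\}$ is consistent, and for every antichain $A\subseteq L^2$, $\{\varphi(x,b_{i,j}):(i,j)\in A\}$ is $k$-inconsistent. It is a strong $k$-grid if moreover $\{\varphi(x,b_{i,j}):(i,j)\in C\}$ is consistent for every chain $C\subseteq L^2$. An infinite (strong) $k$-grid is one indexed by some infinite $L$. *)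

From Stdlib Require Import List Arith Fin.
Import ListNotations.

Set Implicit Arguments.

Record signature : Type := {
  func : Type;
  func_ar : func -> nat;
  rel : Type;
  rel_ar : rel -> nat
}.

Section FOL.
Variable S : signature.

Inductive term : Type :=
| tvar : nat -> term
| tapp : forall f : func S, (Fin.t (func_ar S f) -> term) -> term.

Inductive formula : Type :=
| fbot : formula
| feq : term -> term -> formula
| frel : forall r : rel S, (Fin.t (rel_ar S r) -> term) -> formula
| fimp : formula -> formula -> formula
| fand : formula -> formula -> formula
| f_or : formula -> formula -> formula
| fex : nat -> formula -> formula
| fall : nat -> formula -> formula.

Definition fneg (p : formula) : formula := fimp p fbot.

Fixpoint occurs_term (v : nat) (t : term) : Prop :=
  match t with
  | tvar n => n = v
  | tapp f args => exists i, occurs_term v (args i)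
  end.

Fixpoint free_in (v : nat) (p : formula) : Prop :=
  match p with
  | fbot => False
  | feq t1 t2 => occurs_term v t1 \/ occurs_term v t2
  | frel r args => exists i, occurs_term v (args i)
  | fimp p1 p2 | fand p1 p2 | f_or p1 p2 => free_in v p1 \/ free_in v p2
  | fex w q | fall w q => w <> v /\ free_in v q
  end.

Definition sentence (p : formula) : Prop := forall v, ~ free_in v p.

Record structure : Type := {
  dom :> Type;
  dom_inhabited : dom;   (* first-order structures are nonempty *)
  interp_f : forall f : func S, (Fin.t (func_ar S f) -> dom) -> dom;
  interp_r : forall r : rel S, (Fin.t (rel_ar S r) -> dom) -> Prop
}.

Definition update (M : Type) (a : nat -> M) (v : nat) (d : M) : nat -> M :=
  fun w => if Nat.eqb w v then d else a w.

Fixpoint eval (M : structure) (a : nat -> M) (t : term) : M :=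
  match t with
  | tvar n => a n
  | tapp f args => interp_f M f (fun i => eval M a (args i))
  end.

Fixpoint sat (M : structure) (a : nat -> M) (p : formula) : Prop :=
  match p with
  | fbot => False
  | feq t1 t2 => eval M a t1 = eval M a t2
  | frel r args => interp_r M r (fun i => eval M a (args i))
  | fimp p1 p2 => sat M a p1 -> sat M a p2
  | fand p1 p2 => sat M a p1 /\ sat M a p2
  | f_or p1 p2 => sat M a p1 \/ sat M a p2
  | fex v q => exists d : M, sat M (update a v d) q
  | fall v q => forall d : M, sat M (update a v d) q
  end.

Definition theory := formula -> Prop.

Definition is_model (M : structure) (T : theory) : Prop :=
  forall p, T p -> forall a : nat -> M, sat M a p.

Definition entails (T : theory) (p : formula) : Prop :=
  forall M : structure, is_model M T -> forall a : nat -> M, sat M a p.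

Definition complete_theory (T : theory) : Prop :=
  (forall p, T p -> sentence p) /\
  (exists M : structure, is_model M T) /\
  (forall s, sentence s -> entails T s \/ entails T (fneg s)).

End FOL.

Definition linear_order (L : Type) (le : L -> L -> Prop) : Prop :=
  (forall i, le i i) /\
  (forall i j, le i j -> le j i -> i = j) /\
  (forall i j l, le i j -> le j l -> le i l) /\
  (forall i j, le i j \/ le j i).

Definition infinite_type (L : Type) : Prop :=
  exists f : nat -> L, forall n n', f n = f n' -> n = n'.

Section Grid.
Variables (L : Type) (le : L -> L -> Prop).

Definition lt_L (i j : L) : Prop := le i j /\ i <> j.

Definition ple (p q : L * L) : Prop := le (fst p) (fst q) /\ le (snd p) (snd q).
Definition plt (p q : L * L) : Prop := lt_L (fst p) (fst q) /\ lt_L (snd p) (snd q).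

Definition is_chain (C : L * L -> Prop) : Prop :=
  forall p q, C p -> C q -> ple p q \/ ple q p.

Definition is_strict_chain (C : L * L -> Prop) : Prop :=
  forall p q, C p -> C q -> p <> q -> plt p q \/ plt q p.

Definition is_antichain (A : L * L -> Prop) : Prop :=
  forall p q, A p -> A q -> p <> q -> ~ ple p q /\ ~ ple q p.

Variables (S : signature) (M : structure S) (n : nat) (phi : formula S)
          (b : L * L -> nat -> M).

(* The assignment interpreting x = (x_0..x_{n-1}) as a and y = (y_0,..) as c:
   variable v < n is x_v, variable n + w is y_w. *)
Definition inst (a c : nat -> M) : nat -> M :=
  fun v => if Nat.ltb v n then a v else c (v - n).

(* {phi(x, b_p) : p in C} is consistent (with the elementary diagram of M),
   i.e. finitely satisfiable in M. *)
Definition consistent_family (C : L * L -> Prop) : Prop :=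
  forall F : list (L * L), (forall p, In p F -> C p) ->
    exists a : nat -> M, forall p, In p F -> sat M (inst a (b p)) phi.

Definition k_inconsistent_family (k : nat) (A : L * L -> Prop) : Prop :=
  forall F : list (L * L), NoDup F -> length F = k -> (forall p, In p F -> A p) ->
    ~ exists a : nat -> M, forall p, In p F -> sat M (inst a (b p)) phi.

Definition is_k_grid (k : nat) : Prop :=
  (forall C, is_strict_chain C -> consistent_family C) /\
  (forall A, is_antichain A -> k_inconsistent_family k A).

Definition is_strong_k_grid (k : nat) : Prop :=
  is_k_grid k /\ (forall C, is_chain C -> consistent_family C).

End Grid.

Definition has_infinite_k_grid (S : signature) (T : theory S) (k n : nat)
  (phi : formula S) : Prop :=
  exists (L : Type) (le : L -> L -> Prop), linear_order le /\ infinite_type L /\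
  exists (M : structure S) (b : L * L -> nat -> M),
    is_model M T /\ is_k_grid le M n phi b k.

Definition has_infinite_strong_k_grid (S : signature) (T : theory S) (k n : nat)
  (phi : formula S) : Prop :=
  exists (L : Type) (le : L -> L -> Prop), linear_order le /\ infinite_type L /\
  exists (M : structure S) (b : L * L -> nat -> M),
    is_model M T /\ is_strong_k_grid le M n phi b k.

From Stdlib Require Import List Arith Lia Classical ClassicalEpsilon
  FunctionalExtensionality PropExtensionality ProofIrrelevance.
From mathcomp Require all_boot classical_sets boolp filter.
Import ListNotations.

Set Implicit Arguments.

(* Fix a strictly increasing sequence e of length t^2 in L and send the box
   t x t into L^2 by (i, j) |-> (e (i t + j), e (j t + i)): distinct comparable
   points go to strictly comparable points and incomparable points to
   incomparable ones.  Taking, over a nonprincipal ultrafilter on t, the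
   ultraproduct of the parameters so indexed gives a grid indexed by omega in
   an ultrapower of M.  By Los, every finite subchain of it, strict or not, is
   realized because for large t it comes from a strict chain of the original
   grid, and every antichain stays k-inconsistent. *)

Record is_ultrafilter (I : Type) (U : (I -> Prop) -> Prop) : Prop := {
  uf_meet : forall A B, U A -> U B -> U (fun t => A t /\ B t);
  uf_mono : forall A B : I -> Prop, (forall t, A t -> B t) -> U A -> U B;
  uf_proper : ~ U (fun _ => False);
  uf_ultra : forall A, U A \/ U (fun t => ~ A t)
}.

Module NatUltrafilter.
Import all_boot classical_sets boolp filter.

Lemma exists_cofinite_ultrafilter : exists U : (nat -> Prop) -> Prop,
  is_ultrafilter U /\ forall N, U (fun t => Nat.le N t).
Proof.
have [G [UG sub]] := ultraFilterLemma eventually_filter.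
have PG : ProperFilter G by exact: ultra_proper.
exists G; split; last by move=> N; apply: sub; exists N => // t /= /leP.
split.
- by move=> A B; exact: (@filterI _ G _ A B).
- by move=> A B AB; exact: (@filterS _ G _ A B AB).
- by move=> H; have [? []] := @filter_ex _ G _ set0 H.
- by move=> A; exact: (in_ultra_setVsetC A UG).
Qed.

End NatUltrafilter.

Section Ultrafilter.
Variables (I : Type) (U : (I -> Prop) -> Prop).
Hypothesis HU : is_ultrafilter U.

Lemma uf_contra (A : I -> Prop) : U A -> U (fun t => ~ A t) -> False.
Proof.
  intros HA HnA. apply (uf_proper HU).
  exact (uf_mono HU _ _ (fun t h => proj2 h (proj1 h)) (uf_meet HU _ _ HA HnA)).
Qed.

Lemma uf_all (A : I -> Prop) : (forall t, A t) -> U A.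
Proof.
  intros HA. destruct (uf_ultra HU A) as [H | H]; [exact H |].
  exfalso. apply (uf_proper HU). exact (uf_mono HU _ _ (fun t h => h (HA t)) H).
Qed.

Lemma uf_witness (A : I -> Prop) : U A -> exists t, A t.
Proof.
  intros HA. apply NNPP. intros Hn. apply (uf_proper HU).
  apply (uf_mono HU A); [| exact HA]. intros t Ht. apply Hn. exists t. exact Ht.
Qed.

Lemma uf_congr (A B : I -> Prop) : U (fun t => A t <-> B t) -> (U A <-> U B).
Proof.
  intros H. split; intros HX; eapply (uf_mono HU); try exact (uf_meet HU _ _ H HX);
    intros t [E Ht]; apply E; exact Ht.
Qed.

Lemma uf_imp (A B : I -> Prop) : (U A -> U B) <-> U (fun t => A t -> B t).
Proof.
  split.
  - intros H. destruct (uf_ultra HU A) as [HA | HnA].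
    + exact (uf_mono HU _ _ (fun t h _ => h) (H HA)).
    + exact (uf_mono HU _ _ (fun t h a => False_ind _ (h a)) HnA).
  - intros H HA. exact (uf_mono HU _ _ (fun t h => proj1 h (proj2 h)) (uf_meet HU _ _ H HA)).
Qed.

Lemma uf_and (A B : I -> Prop) : (U A /\ U B) <-> U (fun t => A t /\ B t).
Proof.
  split.
  - intros [HA HB]. exact (uf_meet HU _ _ HA HB).
  - intros H. split; [exact (uf_mono HU _ _ (fun t h => proj1 h) H)
                     | exact (uf_mono HU _ _ (fun t h => proj2 h) H)].
Qed.

Lemma uf_or (A B : I -> Prop) : (U A \/ U B) <-> U (fun t => A t \/ B t).
Proof.
  split.
  - intros [HA | HB]; [exact (uf_mono HU _ _ (fun t h => or_introl h) HA)
                     | exact (uf_mono HU _ _ (fun t h => or_intror h) HB)].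
  - intros H. destruct (uf_ultra HU A) as [HA | HnA]; [left; exact HA | right].
    apply (uf_mono HU (fun t => (A t \/ B t) /\ ~ A t)); [| exact (uf_meet HU _ _ H HnA)].
    intros t [[a | b] na]; [contradiction | exact b].
Qed.

Lemma uf_forall_fin n (P : Fin.t n -> I -> Prop) :
  (forall i, U (P i)) -> U (fun t => forall i, P i t).
Proof.
  induction n as [| n IHn]; intros H.
  - apply uf_all. intros t i. exact (Fin.case0 (fun i => P i t) i).
  - pose proof (uf_meet HU _ _ (H Fin.F1) (IHn _ (fun i => H (Fin.FS i)))) as H'.
    eapply (uf_mono HU); [| exact H']. intros t [h0 hs] i.
    exact (Fin.caseS' i (fun i => P i t) h0 hs).
Qed.

Lemma uf_forall_list (X : Type) (F : list X) (P : X -> I -> Prop) :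
  (forall x, In x F -> U (P x)) -> U (fun t => forall x, In x F -> P x t).
Proof.
  induction F as [| y F IH]; intros H.
  - apply uf_all. intros t x [].
  - pose proof (uf_meet HU _ _ (H y (or_introl eq_refl))
                  (IH (fun x hx => H x (or_intror hx)))) as H'.
    eapply (uf_mono HU); [| exact H']. intros t [hy hF] x [<- | hx]; [exact hy | exact (hF x hx)].
Qed.

Lemma uf_choice (X : Type) (x0 : X) (P : I -> X -> Prop) :
  U (fun t => exists x, P t x) -> exists h : I -> X, U (fun t => P t (h t)).
Proof.
  intros H.
  destruct (choice (fun t x => (exists y, P t y) -> P t x)) as [h Hh].
  { intros t. destruct (classic (exists y, P t y)) as [[y Hy] | Hn].
    - exists y. intros _. exact Hy.
    - exists x0. intros Hy. contradiction. }
  exists h. exact (uf_mono HU _ _ Hh H).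
Qed.

Definition ueq (X : Type) (f g : I -> X) : Prop := U (fun t => f t = g t).

Lemma ueq_refl (X : Type) (f : I -> X) : ueq f f.
Proof. apply uf_all. reflexivity. Qed.

Lemma ueq_sym (X : Type) (f g : I -> X) : ueq f g -> ueq g f.
Proof. apply (uf_mono HU). auto. Qed.

Lemma ueq_trans (X : Type) (f g h : I -> X) : ueq f g -> ueq g h -> ueq f h.
Proof.
  intros H1 H2. exact (uf_mono HU _ _ (fun t e => eq_trans (proj1 e) (proj2 e)) (uf_meet HU _ _ H1 H2)).
Qed.

Section Ultrapower.
Variables (S : signature) (M : structure S).

(* Classes of [ueq] are represented by a chosen canonical member, so that the
   carrier is a subtype of [I -> M] rather than a quotient. *)
Definition canon (f : I -> M) : I -> M :=
  epsilon (inhabits (fun _ => dom_inhabited M)) (fun h => ueq h f).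

Lemma canon_spec (f : I -> M) : ueq (canon f) f.
Proof. apply (epsilon_spec _ (fun h => ueq h f)). exists f. apply ueq_refl. Qed.

Lemma canon_ueq (f g : I -> M) : ueq f g -> canon f = canon g.
Proof.
  intros H. unfold canon. f_equal.
  extensionality h. apply propositional_extensionality. split; intros Hh.
  - exact (ueq_trans Hh H).
  - exact (ueq_trans Hh (ueq_sym H)).
Qed.

Definition ultrapower_dom : Type := {f : I -> M | canon f = f}.

Definition cls (f : I -> M) : ultrapower_dom :=
  exist _ (canon f) (canon_ueq (canon_spec f)).

Definition rep (x : ultrapower_dom) : I -> M := proj1_sig x.

Lemma rep_cls (f : I -> M) : ueq (rep (cls f)) f.
Proof. exact (canon_spec f). Qed.

Lemma cls_rep (x : ultrapower_dom) : cls (rep x) = x.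
Proof.
  apply eq_sig_hprop; [intros; apply proof_irrelevance |].
  exact (proj2_sig x).
Qed.

Lemma cls_eq_iff (f g : I -> M) : cls f = cls g <-> ueq f g.
Proof.
  split.
  - intros H. apply (ueq_trans (ueq_sym (rep_cls f))). rewrite H. apply rep_cls.
  - intros H. apply eq_sig_hprop; [intros; apply proof_irrelevance |].
    exact (canon_ueq H).
Qed.

Lemma rep_cls_fin n (h : Fin.t n -> I -> M) :
  U (fun t => forall i, rep (cls (h i)) t = h i t).
Proof. apply uf_forall_fin. intros i. apply rep_cls. Qed.

Definition ultrapower : structure S := {|
  dom := ultrapower_dom;
  dom_inhabited := cls (fun _ => dom_inhabited M);
  interp_f := fun f args => cls (fun t => interp_f M f (fun i => rep (args i) t));
  interp_r := fun r args => U (fun t => interp_r M r (fun i => rep (args i) t))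
|}.

Definition cls_fam (g : I -> nat -> M) : nat -> ultrapower := fun v => cls (fun t => g t v).

Lemma cls_fam_rep (a : nat -> ultrapower) : cls_fam (fun t v => rep (a v) t) = a.
Proof. extensionality v. apply cls_rep. Qed.

Lemma update_cls (g : I -> nat -> M) v (h : I -> M) :
  update (cls_fam g) v (cls h) = cls_fam (fun t => update (g t) v (h t)).
Proof. extensionality w. unfold update, cls_fam. destruct (Nat.eqb w v); reflexivity. Qed.

Lemma eval_cls (g : I -> nat -> M) (tm : term S) :
  eval ultrapower (cls_fam g) tm = cls (fun t => eval M (g t) tm).
Proof.
  induction tm as [v | f args IH]; [reflexivity |].
  change (interp_f ultrapower f (fun i => eval ultrapower (cls_fam g) (args i)) =
          cls (fun t => interp_f M f (fun i => eval M (g t) (args i)))).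
  replace (fun i => eval ultrapower (cls_fam g) (args i))
    with (fun i => cls (fun t => eval M (g t) (args i))) by (extensionality i; auto).
  apply cls_eq_iff.
  eapply (uf_mono HU); [| exact (rep_cls_fin (fun i t => eval M (g t) (args i)))].
  intros t h. cbv beta. f_equal. extensionality i. apply h.
Qed.

Theorem los (p : formula S) :
  forall g : I -> nat -> M, sat ultrapower (cls_fam g) p <-> U (fun t => sat M (g t) p).
Proof.
  induction p as [| t1 t2 | r args | p1 IH1 p2 IH2 | p1 IH1 p2 IH2 | p1 IH1 p2 IH2
                 | v q IH | v q IH]; intros g; cbn [sat].
  - split; [tauto | intros H; exact (uf_proper HU H)].
  - rewrite !eval_cls. apply cls_eq_iff.
  - replace (fun i => eval ultrapower (cls_fam g) (args i))
      with (fun i => cls (fun t => eval M (g t) (args i)))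
      by (extensionality i; symmetry; apply eval_cls).
    apply uf_congr.
    eapply (uf_mono HU); [| exact (rep_cls_fin (fun i t => eval M (g t) (args i)))].
    intros t h. cbv beta.
    replace (fun i => rep (cls (fun t => eval M (g t) (args i))) t)
      with (fun i => eval M (g t) (args i)) by (extensionality i; symmetry; apply h).
    tauto.
  - rewrite IH1, IH2. apply uf_imp.
  - rewrite IH1, IH2. apply uf_and.
  - rewrite IH1, IH2. apply uf_or.
  - split.
    + intros [d Hd]. rewrite <- (cls_rep d), update_cls, IH in Hd.
      exact (uf_mono HU _ _ (fun t h => ex_intro _ (rep d t) h) Hd).
    + intros H. destruct (uf_choice (dom_inhabited M) _ H) as [h Hh].
      exists (cls h). rewrite update_cls, IH. exact Hh.
  - split.
    + intros Hall. destruct (uf_ultra HU (fun t => forall d, sat M (update (g t) v d) q))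
        as [H | Hn]; [exact H | exfalso].
      apply (uf_mono HU _ (fun t => exists d, ~ sat M (update (g t) v d) q)) in Hn;
        [| intros t Ht; exact (not_all_ex_not _ _ Ht)].
      destruct (uf_choice (dom_inhabited M) _ Hn) as [h Hh].
      specialize (Hall (cls h)). rewrite update_cls, IH in Hall.
      exact (uf_contra Hall Hh).
    + intros H d. rewrite <- (cls_rep d), update_cls, IH.
      eapply (uf_mono HU); [| exact H]. intros t h. exact (h (rep d t)).
Qed.

Lemma ultrapower_model (T : theory S) : is_model M T -> is_model ultrapower T.
Proof.
  intros HM p Tp a. rewrite <- (cls_fam_rep a), los.
  apply uf_all. intros t. exact (HM p Tp _).
Qed.

Lemma inst_cls_fam n (x y : I -> nat -> M) :
  inst ultrapower n (cls_fam x) (cls_fam y) = cls_fam (fun t => inst M n (x t) (y t)).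
Proof. extensionality v. unfold inst, cls_fam. destruct (Nat.ltb v n); reflexivity. Qed.

End Ultrapower.
End Ultrafilter.

Section LinearOrder.
Variables (L : Type) (le : L -> L -> Prop).
Hypothesis Hlin : linear_order le.

Lemma lt_L_trans x y z : lt_L le x y -> lt_L le y z -> lt_L le x z.
Proof.
  destruct Hlin as [_ [Hanti [Htrans _]]]. intros [h1 n1] [h2 n2].
  split; [eauto |]. intros ->. apply n1. apply Hanti; auto.
Qed.

Lemma lt_L_not_le x y (Hxy : lt_L le x y) : ~ le y x.
Proof. destruct Hlin as [_ [Hanti _]]. destruct Hxy as [h n]. intros h'. apply n, Hanti; auto. Qed.

Lemma lt_L_total x y (Hne : x <> y) : lt_L le x y \/ lt_L le y x.
Proof.
  destruct Hlin as [_ [_ [_ Htot]]].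
  destruct (Htot x y); [left | right]; split; auto.
Qed.

Lemma strict_chain_is_chain (C : L * L -> Prop) : is_strict_chain le C -> is_chain le C.
Proof.
  destruct Hlin as [Hrefl _]. intros HC p q Cp Cq.
  destruct (classic (p = q)) as [-> | Hne]; [left; split; apply Hrefl |].
  destruct (HC p q Cp Cq Hne) as [[[h1 _] [h2 _]] | [[h1 _] [h2 _]]];
    [left | right]; split; assumption.
Qed.

Definition increasing_below (e : nat -> L) (N : nat) : Prop :=
  forall a c, a < c < N -> lt_L le (e a) (e c).

Lemma insertion_point (e : nat -> L) (x : L) N
  (Hinc : increasing_below e N) (Hne : forall a, a < N -> e a <> x) :
  exists j, j <= N /\ (forall a, a < j -> lt_L le (e a) x) /\
                      (forall a, j <= a < N -> lt_L le x (e a)).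
Proof.
  revert Hinc Hne. induction N as [| N IH]; intros Hinc Hne.
  - exists 0. split; [lia |]. split; intros; lia.
  - destruct IH as [j [Hj [Hbelow Habove]]];
      [intros a c ?; apply Hinc; lia | intros a ?; apply Hne; lia |].
    destruct (Nat.eq_dec j N) as [-> | HjN].
    + destruct (lt_L_total (Hne N (Nat.lt_succ_diag_r N))) as [Hlt | Hlt].
      * exists (S N). split; [lia |]. split; [| intros; lia].
        intros a Ha. destruct (Nat.eq_dec a N) as [-> | ]; [exact Hlt | apply Hbelow; lia].
      * exists N. split; [lia |]. split; [exact Hbelow |].
        intros a Ha. replace a with N by lia. exact Hlt.
    + exists j. split; [lia |]. split; [exact Hbelow |].
      intros a Ha. destruct (Nat.eq_dec a N) as [-> | ]; [| apply Habove; lia].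
      apply lt_L_trans with (e (N - 1)); [apply Habove; lia | apply Hinc; lia].
Qed.

Lemma increasing_enumeration (f : nat -> L) (Hf : forall m m', f m = f m' -> m = m') N : exists e, increasing_below e N /\ forall a, a < N -> exists c, c < N /\ e a = f c.
Proof.
  induction N as [| N [e [Hinc Him]]].
  - exists f. split; [intros a c ? | intros a ?]; lia.
  - assert (Hne : forall a, a < N -> e a <> f N).
    { intros a Ha Heq. destruct (Him a Ha) as [c [Hc Hec]].
      rewrite Hec in Heq. apply Hf in Heq. lia. }
    destruct (insertion_point Hinc Hne) as [j [Hj [Hbelow Habove]]].
    exists (fun a => if Nat.ltb a j then e a else if Nat.eqb a j then f N else e (a - 1)).
    split.
    + intros a c Hac.
      destruct (Nat.ltb_spec a j), (Nat.eqb_spec a j), (Nat.ltb_spec c j), (Nat.eqb_spec c j);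
        try lia; first [apply Hinc | apply Hbelow | apply Habove]; lia.
    + intros a Ha.
      destruct (Nat.ltb_spec a j), (Nat.eqb_spec a j); [lia | | exists N; split; [lia | reflexivity] |].
      * destruct (Him a ltac:(lia)) as [c [Hc E]]. exists c. split; [lia | exact E].
      * destruct (Him (a - 1) ltac:(lia)) as [c [Hc E]]. exists c. split; [lia | exact E].
Qed.

Lemma long_increasing_sequences :
  infinite_type L -> exists E : nat -> nat -> L, forall N, increasing_below (E N) N.
Proof.
  intros [f Hf]. apply (choice (fun N e => increasing_below e N)).
  intros N. destruct (increasing_enumeration f Hf N) as [e [He _]]. exists e. exact He.
Qed.

Definition in_box (t : nat) (p : nat * nat) : Prop := fst p < t /\ snd p < t.

Definition sq_embed (e : nat -> L) (t : nat) (p : nat * nat) : L * L :=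
  (e (fst p * t + snd p), e (snd p * t + fst p)).

Section SquareEmbedding.
Variables (e : nat -> L) (t : nat).
Hypothesis He : increasing_below e (t * t).

Lemma sq_embed_strict p q : in_box t p -> in_box t q ->
  ple Nat.le p q -> p <> q -> plt le (sq_embed e t p) (sq_embed e t q).
Proof.
  destruct p as [i j], q as [i' j']; unfold in_box, ple, plt, sq_embed; simpl.
  intros [h1 h2] [h3 h4] [h5 h6] hne.
  assert (i < i' \/ j < j') as Hc.
  { destruct (Nat.eq_dec i i'), (Nat.eq_dec j j'); subst; try lia. congruence. }
  split; apply He; destruct Hc; nia.
Qed.

Lemma sq_embed_incomparable p q : in_box t p -> in_box t q ->
  ~ ple Nat.le p q -> ~ ple Nat.le q p -> ~ ple le (sq_embed e t p) (sq_embed e t q).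
Proof.
  destruct p as [i j], q as [i' j']; unfold in_box, ple, sq_embed; simpl.
  intros [h1 h2] [h3 h4] n1 n2 [k1 k2].
  assert ((i < i' /\ j' < j) \/ (i' < i /\ j < j')) as [[c1 c2] | [c1 c2]] by lia.
  - exact (lt_L_not_le (He (a := j' * t + i') (c := j * t + i) ltac:(nia)) k2).
  - exact (lt_L_not_le (He (a := i' * t + j') (c := i * t + j) ltac:(nia)) k1).
Qed.

Lemma sq_embed_strict_chain (F : list (nat * nat))
  (HB : forall p, In p F -> in_box t p) (HC : is_chain Nat.le (fun p => In p F)) :
  is_strict_chain le (fun q => In q (map (sq_embed e t) F)).
Proof.
  intros q1 q2 Hq1 Hq2 Hne.
  apply in_map_iff in Hq1 as [p1 [<- I1]]. apply in_map_iff in Hq2 as [p2 [<- I2]].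
  assert (p1 <> p2) by congruence.
  destruct (HC p1 p2 I1 I2); [left | right]; apply sq_embed_strict; auto.
Qed.

Lemma sq_embed_antichain (F : list (nat * nat))
  (HB : forall p, In p F -> in_box t p) (HA : is_antichain Nat.le (fun p => In p F)) :
  is_antichain le (fun q => In q (map (sq_embed e t) F)).
Proof.
  intros q1 q2 Hq1 Hq2 Hne.
  apply in_map_iff in Hq1 as [p1 [<- I1]]. apply in_map_iff in Hq2 as [p2 [<- I2]].
  assert (p1 <> p2) by congruence.
  destruct (HA p1 p2 I1 I2) as [n1 n2]; [assumption |].
  split; apply sq_embed_incomparable; auto.
Qed.

Lemma sq_embed_NoDup (F : list (nat * nat))
  (HB : forall p, In p F -> in_box t p) (HA : is_antichain Nat.le (fun p => In p F)) :
  NoDup F -> NoDup (map (sq_embed e t) F).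
Proof.
  destruct Hlin as [Hrefl _].
  apply NoDup_map_NoDup_ForallPairs. intros p1 p2 I1 I2 Heq.
  apply NNPP. intros Hne. destruct (HA p1 p2 I1 I2 Hne) as [n1 _].
  apply (sq_embed_incomparable (HB p1 I1) (HB p2 I2) n1 (proj2 (HA p1 p2 I1 I2 Hne))).
  rewrite Heq. split; apply Hrefl.
Qed.

End SquareEmbedding.
End LinearOrder.

Lemma list_in_box (F : list (nat * nat)) :
  exists B, forall t, B <= t -> forall p, In p F -> in_box t p.
Proof.
  induction F as [| [i j] F [B HB]]; [exists 0; intros t _ p [] |].
  exists (Nat.max B (S (Nat.max i j))). intros t Ht p [<- | Ip].
  - unfold in_box; simpl; lia.
  - apply HB; [lia | exact Ip].
Qed.

Lemma linear_order_nat : linear_order Nat.le.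
Proof. repeat split; intros; lia. Qed.

Section StrongGrid.
Variables (L : Type) (le : L -> L -> Prop) (S : signature) (M : structure S)
  (n k : nat) (phi : formula S) (b : L * L -> nat -> M).
Hypothesis Hlin : linear_order le.
Hypothesis Hgrid : is_k_grid le M n phi b k.
Variable E : nat -> nat -> L.
Hypothesis HE : forall t, increasing_below le (E t) (t * t).
Variable U : (nat -> Prop) -> Prop.
Hypothesis HU : is_ultrafilter U.
Hypothesis U_cofinite : forall N, U (fun t => N <= t).

Definition ultra_grid (p : nat * nat) : nat -> ultrapower HU M :=
  cls_fam HU M (fun t => b (sq_embed (E t) t p)).

Lemma ultra_grid_chain (C : nat * nat -> Prop) :
  is_chain Nat.le C -> consistent_family (ultrapower HU M) n phi ultra_grid C.
Proof.
  intros HC F HF. destruct (list_in_box F) as [B HB].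
  assert (Hreal : forall t, exists a : nat -> M, B <= t ->
            forall p, In p F -> sat M (inst M n a (b (sq_embed (E t) t p))) phi).
  { intros t. destruct (le_lt_dec B t) as [Ht | Ht].
    - destruct (proj1 Hgrid _ (sq_embed_strict_chain (HE t) F (HB t Ht)
                  (fun p q Ip Iq => HC p q (HF p Ip) (HF q Iq)))
                  (map (sq_embed (E t) t) F) (fun q Iq => Iq)) as [a Ha].
      exists a. intros _ p Ip. apply Ha, in_map, Ip.
    - exists (fun _ => dom_inhabited M). lia. }
  apply choice in Hreal as [h Hh].
  exists (cls_fam HU M h). intros p Ip. unfold ultra_grid.
  rewrite inst_cls_fam, los.
  exact (uf_mono HU _ _ (fun t Ht => Hh t Ht p Ip) (U_cofinite B)).
Qed.

Lemma ultra_grid_antichain (A : nat * nat -> Prop) :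
  is_antichain Nat.le A -> k_inconsistent_family (ultrapower HU M) n phi ultra_grid k A.
Proof.
  intros HA F HND Hlen HFA_sub [a Ha]. destruct (list_in_box F) as [B HB].
  rewrite <- (cls_fam_rep a) in Ha. set (x := fun t v => rep (a v) t) in Ha.
  assert (Hall : U (fun t => forall p, In p F ->
                      sat M (inst M n (x t) (b (sq_embed (E t) t p))) phi)).
  { apply (uf_forall_list HU). intros p Ip. specialize (Ha p Ip).
    unfold ultra_grid in Ha. rewrite inst_cls_fam, los in Ha. exact Ha. }
  destruct (uf_witness HU _ (uf_meet HU _ _ Hall (U_cofinite B))) as [t [Ht HBt]].
  assert (HFA : is_antichain Nat.le (fun p => In p F))
    by (intros p q Ip Iq; apply HA; auto).
  apply (proj2 Hgrid _ (sq_embed_antichain Hlin (HE t) F (HB t HBt) HFA)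
           (map (sq_embed (E t) t) F)).
  - exact (sq_embed_NoDup Hlin (HE t) (HB t HBt) HFA HND).
  - rewrite length_map. exact Hlen.
  - intros q Iq. exact Iq.
  - exists (x t). intros q Iq. apply in_map_iff in Iq as [p [<- Ip]]. exact (Ht p Ip).
Qed.

Lemma ultra_grid_strong : is_strong_k_grid Nat.le (ultrapower HU M) n phi ultra_grid k.
Proof.
  split; [split |].
  - intros C HC. apply ultra_grid_chain, (strict_chain_is_chain linear_order_nat HC).
  - exact ultra_grid_antichain.
  - exact ultra_grid_chain.
Qed.

End StrongGrid.

Lemma strong_grid_of_grid (S : signature) (T : theory S) (k n : nat) (phi : formula S) :
  has_infinite_k_grid T k n phi -> has_infinite_strong_k_grid T k n phi.
Proof.
  intros (L & le & Hlin & Hinf & M & b & HM & Hgrid).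
  destruct (long_increasing_sequences Hlin Hinf) as [E HE].
  destruct NatUltrafilter.exists_cofinite_ultrafilter as [U [HU Hcof]].
  exists nat, Nat.le. split; [exact linear_order_nat |].
  split; [exists (fun x => x); auto |].
  exists (ultrapower HU M), (ultra_grid M b (fun t => E (t * t)) HU).
  split; [exact (ultrapower_model HM) |].
  exact (ultra_grid_strong Hlin Hgrid _ (fun t => HE (t * t)) HU Hcof).
Qed.

Theorem proposition5p3 (S : signature) (T : theory S) (k n m : nat)
  (phi : formula S) :
  complete_theory T ->
  (forall v, free_in v phi -> v < n + m) ->
  (has_infinite_k_grid T k n phi <-> has_infinite_strong_k_grid T k n phi).
Proof.
  intros _ _. split; [exact (@strong_grid_of_grid S T k n phi) |].
  intros (L & le & Hlin & Hinf & M & b & HM & Hgrid & _).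
  exists L, le. split; [exact Hlin |]. split; [exact Hinf |].
  exists M, b. split; assumption.
Qed.
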